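(* For every bipartite graph $G$ there is a monotone CNF-formula $F$ whose incidence graph is $G$ and such that $\mathbf{psw}(F)\ge 2^{\mathbf{mimw}(G)/2}$.
   Context: A CNF-formula is monotone if all literals are positive. Its incidence graph $I(F)$ is the bipartite graph on $\mathrm{var}(F)\cup\mathrm{cla}(F)$ with $x\sim C$ iff $x$ occurs in $C$. A branch decomposition $(T,\delta)$ of a graph $G$ is a tree with maximum degree $3$ and a bijection from its leaves to $V(G)$; each node $x$ of $T$ (rooted) yields the cut $(A,\bar A)$, $A$ = labels of leaves below $x$. For a symmetric $f$ on cuts, the $f$-width of $(T,\delta)$ is the max of $f$ over its cuts and the $f$-branch width of $G$ is the min over branch decompositions. $\mathbf{mimw}(G)$ is the $f$-branch width for $f(A,\bar A)$ = size of a maximum induced matching in the graph $G[A,\bar A]$ (vertex set $V(G)$, edges of $G$ between $A$ and $\bar A$). For a CNF $F$, a set $\mathcal C$ of clauses is precisely satisfiable if some assignment satisfies exactly the clauses in $\mathcal C$; the PS-value of $F$ is the number of precisely satisfiable clause sets. For $X\subseteq\mathrm{var}(F)$ and $\mathcal C\subseteq\mathrm{cla}(F)$, $F_{X,\mathcal C}$ is obtained by deleting all clauses not in $\mathcal C$ and then all variables not in $X$ from the remaining clauses. For a cut $(A,\bar A)$ of $I(F)$ with $X=A\cap\mathrm{var}(F)$, $\bar X=\bar A\cap\mathrm{var}(F)$, $\mathcal C=A\cap\mathrm{cla}(F)$, $\bar{\mathcal C}=\bar A\cap\mathrm{cla}(F)$, let $ps(A,\bar A)$ be the maximum of the PS-values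 of $F_{X,\bar{\mathcal C}}$ and $F_{\bar X,\mathcal C}$. $\mathbf{psw}(F)$ is the $ps$-branch width of $I(F)$. *)

From mathcomp Require Import all_boot.
Set Implicit Arguments. Unset Strict Implicit. Unset Printing Implicit Defensive.

(* A CNF formula F: its variables var(F) = cvars, its clauses cla(F) = ccls
   (both subsets of a common finite vertex type T), and for every clause vertex C
   the set of literals of C; a literal is a pair (x, b), b = true meaning the
   positive literal x and b = false the negative literal ~x.  Clauses are
   identified by their vertex, so two clauses may have equal literal sets. *)
Record cnf (T : finType) := CNF {
  cvars : {set T};
  ccls : {set T};
  clause : T -> {set T * bool}
}.

Definition cnf_wf (T : finType) (F : cnf T) : Prop :=
  [disjoint cvars F & ccls F] /\
  (forall C l, C \in ccls F -> l \in clause F C -> l.1 \in cvars F).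

Definition monotone (T : finType) (F : cnf T) : Prop :=
  forall C l, C \in ccls F -> l \in clause F C -> l.2 = true.

Definition occurs (T : finType) (F : cnf T) (x C : T) : bool :=
  ((x, true) \in clause F C) || ((x, false) \in clause F C).

Definition incidence (T : finType) (F : cnf T) : rel T :=
  fun u v =>
    [&& u \in cvars F, v \in ccls F & occurs F u v] ||
    [&& v \in cvars F, u \in ccls F & occurs F v u].

(* an assignment is the set tau of variables set to true *)
Definition sat_clause (T : finType) (tau : {set T}) (c : {set T * bool}) : bool :=
  [exists l in c, (l.1 \in tau) == l.2].

Definition psvalue (T : finType) (F : cnf T) : nat :=
  #|[set S : {set T} | [exists tau : {set T},
       (tau \subset cvars F) &&
       (S == [set C in ccls F | sat_clause tau (clause F C)])]]|.

Definition subformula (T : finType) (F : cnf T) (X Cs : {set T}) : cnf T :=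
  CNF (cvars F :&: X) (ccls F :&: Cs)
      (fun C => [set l in clause F C | l.1 \in X]).

Definition ps (T : finType) (F : cnf T) (A : {set T}) : nat :=
  maxn (psvalue (subformula F (A :&: cvars F) (~: A :&: ccls F)))
       (psvalue (subformula F (~: A :&: cvars F) (A :&: ccls F))).

(* An induced matching of G[A,~A] is given as a set M of pairs (a,b) with
   a in A, b not in A, ab an edge; it is induced iff no edge of G[A,~A] joins
   the endpoints of two different pairs (this also forces disjointness). *)
Definition induced_matching (T : finType) (e : rel T) (A : {set T})
    (M : {set T * T}) : bool :=
  [forall p in M, [&& p.1 \in A, p.2 \notin A & e p.1 p.2]] &&
  [forall p in M, forall q in M, e p.1 q.2 ==> (p == q)].

Definition mim (T : finType) (e : rel T) (A : {set T}) : nat :=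
  \max_(M : {set T * T} | induced_matching e A M) #|M|.

Definition degree (N : finType) (t : rel N) (n : N) : nat := #|[set m | t n m]|.

Definition is_tree (N : finType) (t : rel N) : Prop :=
  0 < #|N| /\ symmetric t /\ irreflexive t /\
  (forall u v, connect t u v) /\
  ~ (exists s : seq N, [&& uniq s, 2 < size s & cycle t s]).

Definition leaf (N : finType) (t : rel N) (n : N) : bool := degree t n <= 1.

Definition branch_dec (T N : finType) (t : rel N) (lab : N -> T) : Prop :=
  is_tree t /\ (forall n, degree t n <= 3) /\
  {in [pred n | leaf t n] &, injective lab} /\
  (forall x : T, exists2 n, leaf t n & lab n = x).

(* Rooting T at any node, the cut of a node x is given by the leaves below x:
   this is the side containing the child of one of the tree edges, or the
   whole vertex set for the root.  We list the sides of all tree edges in both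
   orientations: side u v = labels of leaves in the component of u in T - uv. *)
Definition side (T N : finType) (t : rel N) (lab : N -> T) (u v : N) : {set T} :=
  let t' := [rel a b | t a b && ~~ (((a == u) && (b == v)) || ((a == v) && (b == u)))] in
  [set x : T | [exists n, [&& leaf t n, lab n == x & connect t' u n]]].

Definition width (T N : finType) (f : {set T} -> nat) (t : rel N) (lab : N -> T) : nat :=
  maxn (f setT) (\max_(p : N * N | t p.1 p.2) f (side t lab p.1 p.2)).

Definition is_branchwidth (T : finType) (f : {set T} -> nat) (k : nat) : Prop :=
  (exists (N : finType) (t : rel N) (lab : N -> T), branch_dec t lab /\ width f t lab = k) /\
  (forall (N : finType) (t : rel N) (lab : N -> T), branch_dec t lab -> k <= width f t lab).

Definition bipartite_graph (T : finType) (e : rel T) : Prop :=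
  symmetric e /\ irreflexive e /\
  exists col : T -> bool, forall x y, e x y -> col x != col y.

From mathcomp Require Import all_boot.
Set Implicit Arguments. Unset Strict Implicit. Unset Printing Implicit Defensive.

(* Colour the bipartite graph and take the vertices of one colour as the
   variables and the others as the clauses, each clause containing its
   neighbours positively.  Let M be an induced matching of G[A, ~A] and M1 the
   pairs of M whose variable end lies in A.  In F_{A, ~A} the variable of each
   pair of M1 occurs in the clause of that pair and in no other clause of M1,
   so setting to true the variables of any P <= M1 satisfies, among the
   clauses of M1, exactly those of P: this gives 2^|M1| distinct precisely
   satisfiable sets.  Symmetrically F_{~A, A} has PS-value at least
   2^|M \ M1|, so 2^|M| <= ps(A, ~A)^2 for every cut, and this inequality
   between the cut functions passes to the widths. *)

Section IsolatedPairs.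

Variables (T : finType) (F : cnf T) (X Cs : {set T}).
Variables (N : {set T * T}) (v c : T * T -> T).

Hypothesis F_monotone : monotone F.
Hypothesis v_var : forall p, p \in N -> v p \in cvars F :&: X.
Hypothesis c_cls : forall p, p \in N -> c p \in ccls F :&: Cs.
Hypothesis v_in_c :
  forall p q, p \in N -> q \in N -> ((v p, true) \in clause F (c q)) = (p == q).

Let F' := subformula F X Cs.

Let satisfied (P : {set T * T}) : {set T} :=
  [set C in ccls F' | sat_clause (v @: P) (clause F' C)].

Lemma satisfied_isolated (P : {set T * T}) q :
  P \subset N -> q \in N -> (c q \in satisfied P) = (q \in P).
Proof.
move=> sPN qN; have cq := c_cls qN; have /setIP [cqF _] := cq.
rewrite inE /= cq /=; apply/existsP/idP => [[[x b]]|qP].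
- rewrite /= inE => /andP [/andP [xc _]].
  have /= b_true := F_monotone cqF xc; subst b.
  rewrite eqb_id /= => /imsetP [p pP xE]; move: xc.
  by rewrite xE (v_in_c (subsetP sPN p pP) qN) => /eqP <-.
- exists (v q, true); rewrite /= inE v_in_c // eqxx /=.
  have := v_var qN; rewrite inE => /andP [_ ->].
  by rewrite eqb_id; apply/imsetP; exists q.
Qed.

Lemma exp2_card_le_psvalue : 2 ^ #|N| <= psvalue F'.
Proof.
have inj : {in powerset N &, injective satisfied}.
  move=> P P'; rewrite !inE => sPN sP'N eqS; apply/setP=> q.
  have [qN|qNN] := boolP (q \in N).
    by rewrite -(satisfied_isolated sPN qN) eqS satisfied_isolated.
  by rewrite (contraNF (subsetP sPN q)) // (contraNF (subsetP sP'N q)).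
rewrite -card_powerset -(card_in_imset inj); apply: subset_leq_card.
apply/subsetP=> _ /imsetP [P PN ->]; rewrite inE; apply/existsP; exists (v @: P).
rewrite eqxx andbT; apply/subsetP=> _ /imsetP [p pP ->].
rewrite inE in PN; have := v_var (subsetP PN p pP); rewrite inE => /andP [] //.
Qed.

End IsolatedPairs.

Section Width.

Variables (T N : finType) (t : rel N) (lab : N -> T).

Definition decomposition_cut (A : {set T}) : Prop :=
  A = setT \/ exists2 p : N * N, t p.1 p.2 & A = side t lab p.1 p.2.

Lemma cut_le_width (g : {set T} -> nat) (A : {set T}) :
  decomposition_cut A -> g A <= width g t lab.
Proof.
case=> [->|[p tp ->]]; first exact: leq_maxl.
by apply: leq_trans (leq_maxr _ _); apply: (leq_bigmax_cond _ tp).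
Qed.

Lemma exp2_width_le_sq (f g : {set T} -> nat) :
  (forall A, 2 ^ f A <= g A ^ 2) -> 2 ^ width f t lab <= width g t lab ^ 2.
Proof.
move=> fg.
have cut_ok A : decomposition_cut A -> 2 ^ f A <= width g t lab ^ 2.
  by move=> hA; apply: leq_trans (fg A) _; rewrite leq_exp2r //; apply: cut_le_width.
rewrite {1}/width; case: (leqP (f setT)) => _; last exact: cut_ok (or_introl erefl).
elim/big_ind: _ => [|x y|p tp]; last by apply: cut_ok; right; exists p.
- by apply: leq_trans (cut_ok _ (or_introl erefl)); rewrite expn_gt0.
- by move=> hx hy; case: (leqP x y).
Qed.

End Width.

Lemma mim_attained (T : finType) (e : rel T) (A : {set T}) :
  exists2 M, induced_matching e A M & mim e A = #|M|.
Proof.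
have set0_induced : induced_matching e A set0.
  by apply/andP; split; apply/forall_inP => p; rewrite inE.
have [|M Mi mimE] := @eq_bigmax_cond _ [pred M | induced_matching e A M]
  (fun M : {set T * T} => #|M|).
  by apply/card_gt0P; exists set0.
by exists M.
Qed.

Section BipartiteCnf.

Variables (T : finType) (e : rel T) (col : T -> bool).
Hypothesis e_sym : symmetric e.
Hypothesis col_proper : forall x y, e x y -> col x != col y.

Definition bipartite_cnf : cnf T :=
  CNF [set x | col x] [set x | ~~ col x] (fun C => [set l | l.2 && e l.1 C]).

Let F := bipartite_cnf.

Lemma bipartite_cnf_wf : cnf_wf F.
Proof.
split; first by rewrite disjoint_subset; apply/subsetP => x; rewrite !inE => ->.
move=> C [x b]; rewrite !inE /= => cC /andP [_ exC].
by move: (col_proper exC) cC; case: (col x); case: (col C).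
Qed.

Lemma bipartite_cnf_monotone : monotone F.
Proof. by move=> C l _; rewrite inE => /andP []. Qed.

Lemma bipartite_cnf_cover : cvars F :|: ccls F = setT.
Proof. by apply/setP => x; rewrite !inE; case: (col x). Qed.

Lemma bipartite_cnf_incidence x y : incidence F x y = e x y.
Proof.
rewrite /incidence /occurs !inE /= orbF.
case exy: (e x y); last by rewrite e_sym exy !andbF.
by rewrite e_sym exy !andbT; move: (col_proper exy); case: (col x); case: (col y).
Qed.

Lemma bipartite_cnf_cut (A : {set T}) : 2 ^ mim e A <= ps F A ^ 2.
Proof.
have [M /andP [/forall_inP M_cut /forall_inP M_ind] ->] := mim_attained e A.
have M_induced p q : p \in M -> q \in M -> e p.1 q.2 = (p == q).
  move=> pM qM; apply/idP/eqP => [epq|<-]; last by case/and3P: (M_cut p pM).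
  by apply/eqP; move/forall_inP: (M_ind p pM) => /(_ q qM)/implyP; apply.
have M_A p : p \in M -> p.1 \in A by case/M_cut/and3P.
have M_notA p : p \in M -> p.2 \notin A by case/M_cut/and3P.
have col_swap p : p \in M -> col p.2 = ~~ col p.1.
  by case/M_cut/and3P => [_ _ /col_proper]; case: (col p.1); case: (col p.2).
rewrite -(cardsID [set p : T * T | col p.1] M) expnD expnS expn1 /ps; apply: leq_mul.
- apply: leq_trans (leq_maxl _ _).
  apply: (@exp2_card_le_psvalue _ _ _ _ _ (fun p => p.1) (fun p => p.2))
    => [|p|p|p q]; rewrite ?inE /=; first exact: bipartite_cnf_monotone.
  + by case/andP => /M_A -> ->.
  + by case/andP => pM; rewrite col_swap // => ->; rewrite M_notA.
  + by case/andP => pM _ /andP [qM _]; apply: M_induced.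
- apply: leq_trans (leq_maxr _ _).
  apply: (@exp2_card_le_psvalue _ _ _ _ _ (fun p => p.2) (fun p => p.1))
    => [|p|p|p q]; rewrite ?inE /=; first exact: bipartite_cnf_monotone.
  + by case/andP => cp pM; rewrite col_swap // cp M_notA.
  + by case/andP => cp /M_A ->; rewrite cp.
  + by case/andP => _ pM /andP [_ qM]; rewrite e_sym M_induced // eq_sym.
Qed.

End BipartiteCnf.

Theorem lemma10 (T : finType) (e : rel T) :
  bipartite_graph e ->
  exists F : cnf T,
    [/\ cnf_wf F, monotone F,
        cvars F :|: ccls F = setT,
        (forall x y, incidence F x y = e x y) &
        forall m p, is_branchwidth (mim e) m -> is_branchwidth (ps F) p ->
          2 ^ m <= p ^ 2].
Proof.
move=> [e_sym [_ [col col_proper]]].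
exists (bipartite_cnf e col); split.
- exact: bipartite_cnf_wf.
- exact: bipartite_cnf_monotone.
- exact: bipartite_cnf_cover.
- exact: bipartite_cnf_incidence.
move=> m p [_ mim_min] [[N [t [lab [bd <-]]]] _].
apply: leq_trans (exp2_width_le_sq _ _ (bipartite_cnf_cut e_sym col_proper)).
by rewrite leq_exp2l // mim_min.
Qed.
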